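(* Let $G$, $P$, $w$ be as in the context, let $t\in V$, let $\mathcal F\subseteq V\setminus\{t\}$ be a set of failed nodes, and let $s\in V\setminus(\mathcal F\cup\{t\})$ be such that there is a directed path from $s$ to $t$ in $G$ avoiding $\mathcal F$. Let $L_{st}^{\overline{\mathcal F}}$ be the minimum total cost of a directed path from $s$ to $t$ in the graph obtained from $G$ by deleting the nodes of $\mathcal F$. Then $$\lim_{\alpha\to0^+}U_s^{\{t,\overline{\mathcal F\cup\{o\}}\}}(\alpha)=L_{st}^{\overline{\mathcal F}}.$$
   Context: $G=(V,E)$ is a finite directed graph; each edge $e_{ij}\in E$ has a positive cost $w_{ij}$; $P$ is a row-stochastic transition matrix with $P_{ij}>0$ iff $e_{ij}\in E$. Evaporating network $G_\alpha$ ($0<\alpha<1$): Markov chain on $V\cup\{o\}$ with $P_{ij}(\alpha)=P_{ij}\alpha^{w_{ij}}$ ($i,j\in V$), $P_{io}(\alpha)=1-\sum_jP_{ij}\alpha^{w_{ij}}$, $o$ absorbing. Avoidance hitting cost with avoided set $B$: make $t$, $o$ and all nodes of $B\subseteq V\setminus\{t\}$ absorbing in $G_\alpha$, let $\mathcal T=V\setminus(\{t\}\cup B)$, let $Q_x$ be the probability that the chain from $x$ is absorbed at $t$ (so $Q_t=1$, $Q_o=Q_b=0$ for $b\in B$), let $F(\alpha)=(I-P(\alpha)_{\mathcal T\mathcal T})^{-1}$, and set $U_s^{\{t,\overline{B\cup\{o\}}\}}(\alpha)=\sum_{m\in\mathcal T}F_{sm}(\alpha)\frac{Q_m}{Q_s}r_m$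 with $r_m=\sum_iP_{mi}(\alpha)w_{mi}Q_i/Q_m$ (terms with $Q_m=0$ omitted). This is the expected total cost of the walk from $s$ conditioned on being absorbed at $t$ (thus avoiding $B$ and $o$). *)

From Stdlib Require Import Reals Lra Lia List ClassicalEpsilon.
Import ListNotations.
Open Scope R_scope.

(* Nodes of V are the naturals 0..n-1; matrices are functions nat -> nat -> R. *)

Fixpoint sumR (n : nat) (f : nat -> R) : R :=
  match n with
  | O => 0
  | S k => sumR k f + f k
  end.

Definition Pev (P w : nat -> nat -> R) (alpha : R) (i j : nat) : R :=
  P i j * Rpower alpha (w i j).

Definition inT (n t : nat) (B : nat -> bool) (m : nat) : bool :=
  (Nat.ltb m n && negb (Nat.eqb m t) && negb (B m))%bool.

(* The n x n matrix equal to I - P(alpha)_{TT} on T x T and to the identity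
   outside T x T (block diagonal, so its inverse restricted to T x T is
   (I - P(alpha)_{TT})^{-1}). *)
Definition IminusPTT (n t : nat) (B : nat -> bool) (P w : nat -> nat -> R)
  (alpha : R) (i j : nat) : R :=
  (if Nat.eqb i j then 1 else 0) -
  (if (inT n t B i && inT n t B j)%bool then Pev P w alpha i j else 0).

Definition is_inverse (n : nat) (M F : nat -> nat -> R) : Prop :=
  forall i j, (i < n)%nat -> (j < n)%nat ->
    sumR n (fun k => M i k * F k j) = (if Nat.eqb i j then 1 else 0) /\
    sumR n (fun k => F i k * M k j) = (if Nat.eqb i j then 1 else 0).

(* The inverse matrix (chosen by Hilbert's epsilon; it is unique when it exists). *)
Definition inv_mat (n : nat) (M : nat -> nat -> R) : nat -> nat -> R :=
  epsilon (inhabits (fun _ _ => 0)) (is_inverse n M).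

Definition Fmat (n t : nat) (B : nat -> bool) (P w : nat -> nat -> R) (alpha : R)
  : nat -> nat -> R :=
  inv_mat n (IminusPTT n t B P w alpha).

(* Absorption probability at t: Q_t = 1, Q_x = 0 for x in B (and for o),
   Q_x = sum_{m in T} F_xm(alpha) P_mt(alpha) for x in T. *)
Definition Qabs (n t : nat) (B : nat -> bool) (P w : nat -> nat -> R) (alpha : R)
  (x : nat) : R :=
  if Nat.eqb x t then 1
  else if inT n t B x then
    sumR n (fun m => if inT n t B m
                     then Fmat n t B P w alpha x m * Pev P w alpha m t else 0)
  else 0.

Definition rcost (n t : nat) (B : nat -> bool) (P w : nat -> nat -> R) (alpha : R)
  (m : nat) : R :=
  sumR n (fun i => Pev P w alpha m i * w m i * Qabs n t B P w alpha i)
  / Qabs n t B P w alpha m.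

Definition Uavoid (n t : nat) (B : nat -> bool) (P w : nat -> nat -> R) (alpha : R)
  (s : nat) : R :=
  sumR n (fun m =>
    if inT n t B m then
      if Req_EM_T (Qabs n t B P w alpha m) 0 then 0
      else Fmat n t B P w alpha s m
           * (Qabs n t B P w alpha m / Qabs n t B P w alpha s)
           * rcost n t B P w alpha m
    else 0).

Fixpoint walk_to (E : nat -> nat -> Prop) (n : nat) (B : nat -> bool)
  (x : nat) (p : list nat) (t : nat) : Prop :=
  match p with
  | [] => x = t
  | y :: q => E x y /\ (y < n)%nat /\ B y = false /\ walk_to E n B y q t
  end.

Definition avoid_path (E : nat -> nat -> Prop) (n : nat) (B : nat -> bool)
  (s : nat) (p : list nat) (t : nat) : Prop :=
  NoDup (s :: p) /\ walk_to E n B s p t.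

Fixpoint path_cost (w : nat -> nat -> R) (x : nat) (p : list nat) : R :=
  match p with
  | [] => 0
  | y :: q => w x y + path_cost w y q
  end.

Definition is_min_path_cost (E : nat -> nat -> Prop) (n : nat) (B : nat -> bool)
  (w : nat -> nat -> R) (s t : nat) (L : R) : Prop :=
  (exists p, avoid_path E n B s p t /\ path_cost w s p = L) /\
  (forall p, avoid_path E n B s p t -> L <= path_cost w s p).

(** Let Q be the probability of absorption at t and N = Q U the cost-weighted
   absorption probability; on the transient set both solve linear systems with
   matrix I - P(alpha)_TT.  These systems obey a minimum principle, because the
   rows of P(alpha) lose mass.  Compare them with a potential d such that d t = 0
   and d x <= w x j + d j along edges: first Q <= alpha^d, then the excess
   N - d Q solves a system whose source is at most kappa(alpha) alpha^d, where
   kappa = slack_rate tends to 0, so the excess is at most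
   kappa(alpha) (2 alpha)^d h, where h is the absorption time of G_{1/2}.
   For d the shortest-path distance, a shortest path of probability pi gives
   Q_s >= pi alpha^L, hence 0 <= U_s - L <= kappa(alpha) 2^L h_s / pi -> 0. *)

From Stdlib Require Import Reals Lra Lia List Classical ClassicalEpsilon.
From mathcomp Require all_boot all_algebra Rstruct.
Import ListNotations.
Open Scope R_scope.

Lemma sumR_ext n f g : (forall k, (k < n)%nat -> f k = g k) -> sumR n f = sumR n g.
Proof.
  induction n as [|n IH]; intros Hfg; simpl; [reflexivity|].
  rewrite (Hfg n) by lia. rewrite IH; [reflexivity|]. intros k Hk. apply Hfg. lia.
Qed.

Lemma sumR_add n f g : sumR n (fun k => f k + g k) = sumR n f + sumR n g.
Proof. induction n as [|n IH]; simpl; [lra|]. rewrite IH. lra. Qed.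

Lemma sumR_sub n f g : sumR n (fun k => f k - g k) = sumR n f - sumR n g.
Proof. induction n as [|n IH]; simpl; [lra|]. rewrite IH. lra. Qed.

Lemma sumR_scal n c f : sumR n (fun k => c * f k) = c * sumR n f.
Proof. induction n as [|n IH]; simpl; [lra|]. rewrite IH. lra. Qed.

Lemma sumR_0 n : sumR n (fun _ => 0) = 0.
Proof. induction n as [|n IH]; simpl; lra. Qed.

Lemma sumR_swap n m f :
  sumR n (fun i => sumR m (fun j => f i j)) = sumR m (fun j => sumR n (fun i => f i j)).
Proof.
  induction n as [|n IH]; simpl; [now rewrite sumR_0|].
  now rewrite IH, <- sumR_add.
Qed.

Lemma sumR_delta n x g : (x < n)%nat ->
  sumR n (fun k => if Nat.eqb x k then g k else 0) = g x.
Proof.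
  induction n as [|n IH]; simpl; intros Hx; [lia|].
  destruct (Nat.eqb_spec x n) as [<-|Hne].
  - rewrite (sumR_ext _ _ (fun _ => 0)), sumR_0; [lra|].
    intros k Hk. destruct (Nat.eqb_spec x k); [lia|reflexivity].
  - rewrite IH by lia. lra.
Qed.

Lemma sumR_le n f g : (forall k, (k < n)%nat -> f k <= g k) -> sumR n f <= sumR n g.
Proof.
  induction n as [|n IH]; simpl; intros Hfg; [lra|].
  apply Rplus_le_compat; [apply IH; intros; apply Hfg|apply Hfg]; lia.
Qed.

Lemma sumR_ge0 n f : (forall k, (k < n)%nat -> 0 <= f k) -> 0 <= sumR n f.
Proof. intros Hf. rewrite <- (sumR_0 n). now apply sumR_le. Qed.

Lemma sumR_lt n f g : (forall k, (k < n)%nat -> f k <= g k) ->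
  (exists k, (k < n)%nat /\ f k < g k) -> sumR n f < sumR n g.
Proof.
  induction n as [|n IH]; simpl; intros Hfg [k [Hk Hlt]]; [lia|].
  destruct (Nat.eq_dec k n) as [->|Hne].
  - apply Rplus_le_lt_compat; [apply sumR_le; intros; apply Hfg; lia|exact Hlt].
  - apply Rplus_lt_le_compat; [apply IH|apply Hfg; lia].
    + intros; apply Hfg; lia.
    + exists k. split; [lia|exact Hlt].
Qed.

Lemma sumR_term_le n f j : (forall k, (k < n)%nat -> 0 <= f k) -> (j < n)%nat ->
  f j <= sumR n f.
Proof.
  intros Hf Hj. rewrite <- (sumR_delta n j f Hj). apply sumR_le.
  intros k Hk. destruct (Nat.eqb_spec j k) as [<-|]; [lra|now apply Hf].
Qed.

Lemma sumR_eq0_term n f : (forall k, (k < n)%nat -> 0 <= f k) -> sumR n f = 0 ->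
  forall k, (k < n)%nat -> f k = 0.
Proof.
  intros Hf Hs k Hk. pose proof (sumR_term_le n f k Hf Hk). pose proof (Hf k Hk). lra.
Qed.

Lemma sumR_gt0_term n f : 0 < sumR n f -> exists k, (k < n)%nat /\ 0 < f k.
Proof.
  intros Hs. apply NNPP. intros Hno. apply (Rlt_not_le _ _ Hs).
  rewrite <- (sumR_0 n). apply sumR_le. intros k Hk.
  apply Rnot_lt_le. intros Hk'. apply Hno. now exists k.
Qed.

Lemma exists_min_In {X : Type} (C : list X) (Pr : X -> Prop) (c : X -> R) :
  (exists p, In p C /\ Pr p) ->
  exists p, In p C /\ Pr p /\ forall q, In q C -> Pr q -> c p <= c q.
Proof.
  induction C as [|a C IH]; intros [p [Hp Hpr]]; [destruct Hp|].
  destruct (classic (exists p, In p C /\ Pr p)) as [Hex|Hno].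
  - destruct (IH Hex) as [m [Hm [Hpm Hmin]]].
    destruct (classic (Pr a /\ c a < c m)) as [[Ha Hlt]|Hnot].
    + exists a. repeat split; [now left|exact Ha|]. intros q [<-|Hq] Hpq; [lra|].
      pose proof (Hmin q Hq Hpq). lra.
    + exists m. repeat split; [now right|exact Hpm|]. intros q [<-|Hq] Hpq; [|auto].
      apply Rnot_lt_le. intros Hlt. now apply Hnot.
  - destruct Hp as [<-|Hp]; [|exfalso; apply Hno; eauto].
    exists a. repeat split; [now left|exact Hpr|]. intros q [<-|Hq] Hpq; [lra|].
    exfalso. apply Hno. eauto.
Qed.

Lemma Rpower_gt0 a x : 0 < Rpower a x.
Proof. apply exp_pos. Qed.

Lemma Rpower_le_exponent a x y : 0 < a < 1 -> x <= y -> Rpower a y <= Rpower a x.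
Proof.
  intros Ha Hxy. assert (ln a < 0) by (rewrite <- ln_1; apply ln_increasing; lra).
  destruct (Req_dec x y) as [->|Hne]; [lra|].
  left. apply exp_increasing. nra.
Qed.

Lemma Rpower_lt1 a x : 0 < a < 1 -> 0 < x -> Rpower a x < 1.
Proof.
  intros Ha Hx. assert (ln a < 0) by (rewrite <- ln_1; apply ln_increasing; lra).
  rewrite <- exp_0. apply exp_increasing. nra.
Qed.

Lemma Rpower_shift al a b c : 0 < al < 1/2 -> b <= a + c ->
  Rpower al a * Rpower (2 * al) c <= Rpower (1/2) a * Rpower (2 * al) b.
Proof.
  intros Hal Hb.
  replace (Rpower al a) with (Rpower (1/2) a * Rpower (2 * al) a)
    by (rewrite Rpower_mult_distr by lra; f_equal; field).
  rewrite Rmult_assoc, <- Rpower_plus.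
  apply Rmult_le_compat_l; [left; apply Rpower_gt0|].
  apply Rpower_le_exponent; lra.
Qed.

Lemma Rpower_vanishes_at0 e : 0 < e ->
  limit1_in (fun a => Rpower a e) (fun a => 0 < a < 1) 0 0.
Proof.
  intros He eps Heps. exists (Rpower eps (/ e)). split; [apply Rpower_gt0|].
  intros a [[Ha _] Hd]. simpl in *. unfold R_dist in *.
  rewrite Rminus_0_r, Rabs_right in Hd by lra.
  rewrite Rminus_0_r, Rabs_right by (left; apply Rpower_gt0).
  replace eps with (Rpower (Rpower eps (/ e)) e)
    by (rewrite Rpower_mult, Rinv_l, Rpower_1; lra).
  apply Rlt_Rpower_l; lra.
Qed.

Lemma limit1_in_sumR (f : nat -> R -> R) (l : nat -> R) D x0 m :
  (forall k, (k < m)%nat -> limit1_in (f k) D (l k) x0) ->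
  limit1_in (fun x => sumR m (fun k => f k x)) D (sumR m l) x0.
Proof.
  induction m as [|m IH]; intros Hf; cbn [sumR].
  - exact (limit_free (fun _ => 0) D 0 x0).
  - apply limit_plus; [apply IH; intros; apply Hf|apply Hf]; lia.
Qed.

Lemma limit1_in_squeeze f g D l x0 :
  (exists d, 0 < d /\ forall x, D x -> Rabs (x - x0) < d -> Rabs (f x - l) <= g x) ->
  limit1_in g D 0 x0 -> limit1_in f D l x0.
Proof.
  intros [d [Hd Hfg]] Hg eps Heps.
  destruct (Hg eps Heps) as [d' [Hd' Hg']]. simpl in *. unfold Rdist in *.
  exists (Rmin d d'). split; [now apply Rmin_pos|].
  intros x [HDx Hx].
  pose proof (Rmin_l d d'). pose proof (Rmin_r d d').
  assert (Hf : Rabs (f x - l) <= g x) by (apply Hfg; [exact HDx|lra]).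
  assert (Hgx : Rabs (g x - 0) < eps) by (apply Hg'; split; [exact HDx|lra]).
  rewrite Rminus_0_r in Hgx. pose proof (Rle_abs (g x)). lra.
Qed.

Module MatrixInverse.
Import all_boot all_algebra Rstruct GRing.Theory.

Local Open Scope ring_scope.

Lemma sumR_big n (f : nat -> R) : sumR n f = \sum_(i < n) f i.
Proof. by elim: n => [|n IH] /=; rewrite ?big_ord0 // big_ord_recr /= IH. Qed.

(* The statement is read with Stdlib's 0 and *, which ring_scope would replace by
   convertible but syntactically different MathComp operations. *)
Local Close Scope ring_scope.

Lemma injective_has_inverse n (M : nat -> nat -> R) :
  (forall v : nat -> R,
     (forall i, (i < n)%coq_nat -> sumR n (fun k => M i k * v k) = 0) ->
     forall i, (i < n)%coq_nat -> v i = 0) ->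
  exists F, is_inverse n M F.
Proof.
Local Open Scope ring_scope.
case: n M => [|n] M Minj; first by exists (fun _ _ => 0) => i j /ltP.
pose Mm : 'M[R]_n.+1 := \matrix_(i, j) M i j.
have mulmx_entry (A B : 'M[R]_n.+1) i j : (A *m B) (inord i) (inord j) =
    sumR n.+1 (fun k => A (inord i) (inord k) * B (inord k) (inord j)).
  by rewrite mxE sumR_big; apply: eq_bigr => k _; rewrite inord_val.
have Mm_entry i j : (i < n.+1)%coq_nat -> (j < n.+1)%coq_nat ->
    Mm (inord i) (inord j) = M i j.
  by move=> /ltP i_lt /ltP j_lt; rewrite mxE !inordK.
have id_entry i j : (i < n.+1)%coq_nat -> (j < n.+1)%coq_nat ->
    (1%:M : 'M[R]_n.+1) (inord i) (inord j) = if Nat.eqb i j then 1 else 0.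
  move=> /ltP i_lt /ltP j_lt; rewrite mxE -val_eqE /= !inordK //.
  by case: Nat.eqb_spec => [->|/eqP/negbTE->]; rewrite ?eqxx.
have Mm_unit : Mm \in unitmx.
  rewrite -unitmx_tr -row_free_unit -kermx_eq0; apply/rowV0P => v /sub_kermxP vM0.
  apply/rowP => j; rewrite mxE.
  have := Minj (fun k => v 0 (inord k)) _ j (ltP (ltn_ord j)); rewrite inord_val; apply.
  move=> i i_lt; move/matrixP: vM0 => /(_ 0 (inord i)); rewrite !mxE sumR_big.
  move=> vMi; apply: etrans vMi; apply: eq_bigr => k _.
  by rewrite !mxE inord_val inordK 1?mulrC //; apply/ltP.
exists (fun i j => invmx Mm (inord i) (inord j)) => i j i_lt j_lt.
rewrite -!id_entry //; split;
  [rewrite -(mulmxV Mm_unit) | rewrite -(mulVmx Mm_unit)]; rewrite mulmx_entry;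
  by apply: sumR_ext => k k_lt; rewrite Mm_entry.
Qed.

End MatrixInverse.

(** * Absorption in the evaporating network *)

Section EvaporatingNetwork.

Variable n : nat.
Variable E : nat -> nat -> Prop.
Variables P w : nat -> nat -> R.
Hypothesis P_ge0 : forall i j, (i < n)%nat -> (j < n)%nat -> 0 <= P i j.
Hypothesis P_row_sum : forall i, (i < n)%nat -> sumR n (fun j => P i j) = 1.
Hypothesis P_pos_iff_edge :
  forall i j, (i < n)%nat -> (j < n)%nat -> (0 < P i j <-> E i j).
Hypothesis w_pos : forall i j, E i j -> 0 < w i j.
Variable t : nat.
Hypothesis t_lt : (t < n)%nat.
Variable B : nat -> bool.

Notation A := (Pev P w).
Notation T := (inT n t B).
Notation Fm := (Fmat n t B P w).
Notation Q := (Qabs n t B P w).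
Notation ImP := (IminusPTT n t B P w).

Lemma inT_spec m : T m = true <-> (m < n)%nat /\ m <> t /\ B m = false.
Proof.
  unfold inT. rewrite !Bool.andb_true_iff, Nat.ltb_lt, !Bool.negb_true_iff, Nat.eqb_neq.
  tauto.
Qed.

Lemma inT_lt m : T m = true -> (m < n)%nat.
Proof. now rewrite inT_spec. Qed.

Lemma inT_t : T t = false.
Proof. unfold inT. rewrite Nat.eqb_refl. now destruct (Nat.ltb t n). Qed.

Lemma P_eq0_or_edge i j : (i < n)%nat -> (j < n)%nat -> P i j = 0 \/ E i j.
Proof.
  intros Hi Hj. destruct (P_ge0 i j Hi Hj) as [Hp|Hp]; [right|left]; auto.
  now apply P_pos_iff_edge.
Qed.

Lemma Pev_ge0 al i j : (i < n)%nat -> (j < n)%nat -> 0 <= A al i j.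
Proof.
  intros Hi Hj. unfold Pev. apply Rmult_le_pos; [auto|left; apply Rpower_gt0].
Qed.

Lemma Pev_P0 al i j : P i j = 0 -> A al i j = 0.
Proof. intros Hp. unfold Pev. rewrite Hp. ring. Qed.

Lemma Pev_row_sum_lt1 al x : 0 < al < 1 -> (x < n)%nat -> sumR n (fun j => A al x j) < 1.
Proof.
  intros Hal Hx. rewrite <- (P_row_sum x Hx).
  assert (Hlt : forall j, (j < n)%nat -> E x j -> A al x j < P x j).
  { intros j Hj Hxj. unfold Pev.
    pose proof (Rpower_lt1 al (w x j) Hal (w_pos x j Hxj)).
    assert (0 < P x j) by now apply P_pos_iff_edge. nra. }
  apply sumR_lt.
  - intros j Hj. destruct (P_eq0_or_edge x j Hx Hj) as [Hp|Hxj].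
    + rewrite Pev_P0, Hp by exact Hp. lra.
    + left. now apply Hlt.
  - destruct (sumR_gt0_term n (fun j => P x j)) as [j [Hj Hp]].
    { rewrite P_row_sum by exact Hx. lra. }
    exists j. split; [exact Hj|]. apply Hlt; [exact Hj|now apply P_pos_iff_edge].
Qed.

(* At a negative minimum m of v over T, the substochastic row of m gives
   sum_j A m j v j >= v m * sum_j A m j > v m. *)
Lemma minimum_principle al v : 0 < al < 1 ->
  (forall x, T x = true -> sumR n (fun j => A al x j * v j) <= v x) ->
  (forall j, (j < n)%nat -> T j = false -> 0 <= v j) ->
  forall x, T x = true -> 0 <= v x.
Proof.
  intros Hal Hsuper Hbdry x Hx. apply Rnot_lt_le. intros Hvx.
  destruct (exists_min_In (seq 0 n) (fun y => T y = true) v) as [m [_ [HTm Hmin]]].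
  { exists x. split; [apply in_seq; pose proof (inT_lt x Hx); lia|exact Hx]. }
  pose proof (inT_lt m HTm) as Hm.
  assert (Hmin' : forall y, T y = true -> v m <= v y).
  { intros y Hy. apply Hmin; [apply in_seq; pose proof (inT_lt y Hy); lia|exact Hy]. }
  assert (Hvm : v m < 0) by (pose proof (Hmin' x Hx); lra).
  assert (Hge : v m * sumR n (fun j => A al m j) <= sumR n (fun j => A al m j * v j)).
  { rewrite <- sumR_scal. apply sumR_le. intros j Hj.
    pose proof (Pev_ge0 al m j Hm Hj). destruct (T j) eqn:HTj.
    - pose proof (Hmin' j HTj). nra.
    - pose proof (Hbdry j Hj HTj). nra. }
  pose proof (Hsuper m HTm). pose proof (Pev_row_sum_lt1 al m Hal Hm).
  assert (0 <= sumR n (fun j => A al m j)) by (apply sumR_ge0; intros; now apply Pev_ge0).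
  nra.
Qed.

Lemma Fmat_is_inverse al : 0 < al < 1 ->
  is_inverse n (ImP al) (Fm al).
Proof.
  intros Hal. unfold Fmat, inv_mat. apply epsilon_spec.
  apply MatrixInverse.injective_has_inverse. intros v Hv.
  assert (Hout : forall i, (i < n)%nat -> T i = false -> v i = 0).
  { intros i Hi HTi. rewrite <- (Hv i Hi). unfold IminusPTT. rewrite HTi. simpl.
    rewrite <- (sumR_delta n i v Hi) at 1. apply sumR_ext. intros k _.
    destruct (Nat.eqb i k); ring. }
  assert (Hin : forall i, T i = true -> v i = sumR n (fun k => A al i k * v k)).
  { intros i HTi. pose proof (inT_lt i HTi) as Hi. pose proof (Hv i Hi) as H0.
    rewrite (sumR_ext _ _ (fun k => (if Nat.eqb i k then v k else 0) - A al i k * v k))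
      in H0.
    - rewrite sumR_sub, sumR_delta in H0 by exact Hi. lra.
    - intros k Hk. unfold IminusPTT. rewrite HTi. simpl.
      destruct (T k) eqn:HTk; [|rewrite (Hout k Hk HTk)]; destruct (Nat.eqb i k); ring. }
  assert (Hge : forall x, T x = true -> 0 <= v x).
  { apply (minimum_principle al v Hal).
    - intros x Hx. rewrite <- Hin by exact Hx. lra.
    - intros j Hj HTj. rewrite Hout by assumption. lra. }
  assert (Hle : forall x, T x = true -> 0 <= - v x).
  { apply (minimum_principle al (fun x => - v x) Hal).
    - intros x Hx. apply Req_le. rewrite (Hin x Hx).
      rewrite (sumR_ext _ _ (fun k => -1 * (A al x k * v k))), sumR_scal
        by (intros; ring).
      ring.
    - intros j Hj HTj. rewrite Hout by assumption. lra. }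
  intros i Hi. destruct (T i) eqn:HTi; [|now apply Hout].
  pose proof (Hge i HTi). pose proof (Hle i HTi). lra.
Qed.

Definition Fapply al (b : nat -> R) x :=
  if T x then sumR n (fun m => if T m then Fm al x m * b m else 0) else 0.

Lemma Fapply_eq al b x : 0 < al < 1 -> T x = true ->
  Fapply al b x = sumR n (fun j => A al x j * Fapply al b j) + b x.
Proof.
  intros Hal Hx. pose proof (inT_lt x Hx) as Hxn.
  set (y j := sumR n (fun m => if T m then Fm al j m * b m else 0)).
  assert (HMy : sumR n (fun j => ImP al x j * y j) = b x).
  { unfold y. rewrite (sumR_ext _ _
      (fun j => sumR n (fun m => ImP al x j * (if T m then Fm al j m * b m else 0))))
      by (intros; now rewrite sumR_scal).
    rewrite sumR_swap, <- (sumR_delta n x b Hxn). apply sumR_ext. intros m Hm.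
    destruct (T m) eqn:HTm.
    - rewrite (sumR_ext _ _ (fun j => b m * (ImP al x j * Fm al j m))) by (intros; ring).
      rewrite sumR_scal, (proj1 (Fmat_is_inverse al Hal x m Hxn Hm)).
      destruct (Nat.eqb x m); ring.
    - rewrite (sumR_ext _ _ (fun _ => 0)), sumR_0 by (intros; ring).
      destruct (Nat.eqb_spec x m) as [<-|]; [congruence|reflexivity]. }
  assert (HMy' : sumR n (fun j => ImP al x j * y j) =
                 y x - sumR n (fun j => A al x j * Fapply al b j)).
  { rewrite <- (sumR_delta n x y Hxn), <- sumR_sub. apply sumR_ext. intros j Hj.
    change (Fapply al b j) with (if T j then y j else 0).
    unfold IminusPTT. rewrite Hx. simpl.
    destruct (T j); destruct (Nat.eqb x j); ring. }
  change (Fapply al b x) with (if T x then y x else 0). rewrite Hx. lra.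
Qed.

Lemma Qabs_t al : Q al t = 1.
Proof. unfold Qabs. now rewrite Nat.eqb_refl. Qed.

Lemma Qabs_out al j : T j = false -> j <> t -> Q al j = 0.
Proof. intros HTj Hjt. unfold Qabs. now rewrite (proj2 (Nat.eqb_neq j t) Hjt), HTj. Qed.

Lemma Qabs_split al j :
  Q al j = Fapply al (fun m => A al m t) j + (if Nat.eqb t j then 1 else 0).
Proof.
  unfold Qabs, Fapply. destruct (Nat.eqb_spec j t) as [->|Hjt].
  - rewrite inT_t, Nat.eqb_refl. ring.
  - rewrite (proj2 (Nat.eqb_neq t j)) by congruence. destruct (T j); ring.
Qed.

Lemma Qabs_harmonic al x : 0 < al < 1 -> T x = true ->
  Q al x = sumR n (fun j => A al x j * Q al j).
Proof.
  intros Hal Hx. assert (Hxt : x <> t) by (apply inT_spec in Hx; tauto).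
  rewrite Qabs_split, Fapply_eq by assumption.
  rewrite (sumR_ext n (fun j => A al x j * Q al j)
             (fun j => A al x j * Fapply al (fun m => A al m t) j +
                       (if Nat.eqb t j then A al x j else 0)))
    by (intros j _; rewrite Qabs_split; destruct (Nat.eqb t j); ring).
  rewrite sumR_add, sumR_delta by exact t_lt.
  rewrite (proj2 (Nat.eqb_neq t x)) by congruence. ring.
Qed.

Lemma Qabs_ge0 al j : 0 < al < 1 -> 0 <= Q al j.
Proof.
  intros Hal. destruct (Nat.eq_dec j t) as [->|Hjt]; [rewrite Qabs_t; lra|].
  destruct (T j) eqn:HTj; [|rewrite Qabs_out by assumption; lra].
  apply (minimum_principle al (Q al) Hal); [| |exact HTj].
  - intros x Hx. rewrite <- Qabs_harmonic by assumption. lra.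
  - intros k _ HTk. destruct (Nat.eq_dec k t) as [->|Hkt].
    + rewrite Qabs_t. lra.
    + rewrite Qabs_out by assumption. lra.
Qed.

Definition cost_flux al m := sumR n (fun i => A al m i * w m i * Q al i).

(* The numerator N = Q U of the avoidance hitting cost. *)
Definition Ncost al := Fapply al (cost_flux al).

Lemma cost_flux_Qabs0 al m : 0 < al < 1 -> T m = true -> Q al m = 0 ->
  cost_flux al m = 0.
Proof.
  intros Hal Hm HQ. pose proof (inT_lt m Hm) as Hmn.
  rewrite Qabs_harmonic in HQ by assumption.
  assert (Hterm := sumR_eq0_term n _
    (fun k Hk => Rmult_le_pos _ _ (Pev_ge0 al m k Hmn Hk) (Qabs_ge0 al k Hal)) HQ).
  unfold cost_flux. rewrite <- (sumR_0 n). apply sumR_ext. intros k Hk.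
  replace (A al m k * w m k * Q al k) with (w m k * (A al m k * Q al k)) by ring.
  rewrite Hterm by exact Hk. ring.
Qed.

Lemma Uavoid_eq al s : 0 < al < 1 -> T s = true -> Q al s <> 0 ->
  Uavoid n t B P w al s = Ncost al s / Q al s.
Proof.
  intros Hal Hs HQs. unfold Uavoid, Ncost, Fapply. rewrite Hs.
  unfold Rdiv at 2. rewrite Rmult_comm, <- sumR_scal. apply sumR_ext. intros m _.
  destruct (T m) eqn:HTm; [|ring].
  destruct (Req_EM_T (Q al m) 0) as [HQm|HQm].
  - rewrite cost_flux_Qabs0 by assumption. ring.
  - unfold rcost. fold (cost_flux al m). field. split; assumption.
Qed.

(** * Comparison with a potential *)

Section Potential.

Variable d : nat -> R.
Hypothesis d_t : d t = 0.
Hypothesis d_ge0 : forall x, 0 <= d x.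
Hypothesis d_triangle : forall x j, T x = true -> E x j -> d x <= w x j + d j.

Definition slack x j := w x j + d j - d x.

Lemma slack_ge0 x j : T x = true -> E x j -> 0 <= slack x j.
Proof. intros Hx Hxj. pose proof (d_triangle x j Hx Hxj). unfold slack. lra. Qed.

Lemma Qabs_le_Rpower al j : 0 < al < 1 -> Q al j <= Rpower al (d j).
Proof.
  intros Hal. destruct (Nat.eq_dec j t) as [->|Hjt].
  { rewrite Qabs_t, d_t, Rpower_O; lra. }
  destruct (T j) eqn:HTj.
  2:{ rewrite Qabs_out by assumption. left. apply Rpower_gt0. }
  enough (0 <= Rpower al (d j) - Q al j) by lra.
  apply (minimum_principle al (fun k => Rpower al (d k) - Q al k) Hal); [| |exact HTj].
  - intros x Hx. pose proof (inT_lt x Hx) as Hxn.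
    rewrite (sumR_ext _ _ (fun k => A al x k * Rpower al (d k) - A al x k * Q al k))
      by (intros; ring).
    rewrite sumR_sub, <- Qabs_harmonic by assumption.
    enough (Hle : sumR n (fun k => A al x k * Rpower al (d k)) <=
                  Rpower al (d x) * sumR n (fun k => P x k))
      by (rewrite (P_row_sum x Hxn) in Hle; lra).
    rewrite <- sumR_scal. apply sumR_le. intros k Hk.
    destruct (P_eq0_or_edge x k Hxn Hk) as [Hp|Hxk].
    + rewrite Pev_P0, Hp by exact Hp. lra.
    + unfold Pev. rewrite Rmult_assoc, <- Rpower_plus.
      pose proof (Rpower_le_exponent al _ _ Hal (d_triangle x k Hx Hxk)).
      pose proof (P_ge0 x k Hxn Hk). nra.
  - intros k _ HTk. destruct (Nat.eq_dec k t) as [->|Hkt].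
    + rewrite Qabs_t, d_t, Rpower_O; lra.
    + rewrite Qabs_out by assumption. pose proof (Rpower_gt0 al (d k)). lra.
Qed.

(* U s - d s = excess s / Q s. *)
Definition excess al j := Ncost al j - d j * Q al j.

Definition excess_source al x := sumR n (fun j => A al x j * slack x j * Q al j).

Lemma excess_out al j : T j = false -> excess al j = 0.
Proof.
  intros HTj. unfold excess, Ncost, Fapply. rewrite HTj.
  destruct (Nat.eq_dec j t) as [->|Hjt].
  - rewrite d_t. ring.
  - rewrite Qabs_out by assumption. ring.
Qed.

Lemma excess_eq al x : 0 < al < 1 -> T x = true ->
  excess al x = sumR n (fun j => A al x j * excess al j) + excess_source al x.
Proof.
  intros Hal Hx. unfold excess at 1, Ncost.
  rewrite Fapply_eq, (Qabs_harmonic al x) by assumption.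
  unfold excess_source, excess, Ncost, cost_flux, slack.
  rewrite <- sumR_scal, <- sumR_add, <- sumR_sub, <- sumR_add.
  apply sumR_ext. intros. ring.
Qed.

Lemma excess_source_ge0 al x : 0 < al < 1 -> T x = true -> 0 <= excess_source al x.
Proof.
  intros Hal Hx. pose proof (inT_lt x Hx) as Hxn. apply sumR_ge0. intros j Hj.
  destruct (P_eq0_or_edge x j Hxn Hj) as [Hp|Hxj].
  - rewrite Pev_P0 by exact Hp. lra.
  - pose proof (slack_ge0 x j Hx Hxj). pose proof (Pev_ge0 al x j Hxn Hj).
    pose proof (Qabs_ge0 al j Hal). apply Rmult_le_pos; [apply Rmult_le_pos|]; lra.
Qed.

Lemma excess_ge0 al x : 0 < al < 1 -> T x = true -> 0 <= excess al x.
Proof.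
  intros Hal. apply (minimum_principle al (excess al) Hal).
  - intros y Hy. rewrite (excess_eq al y) by assumption.
    pose proof (excess_source_ge0 al y Hal Hy). lra.
  - intros j _ HTj. rewrite excess_out by exact HTj. lra.
Qed.

Definition slack_term al x j := P x j * slack x j * Rpower al (slack x j).

Definition slack_rate al :=
  sumR n (fun x => if T x then sumR n (fun j => slack_term al x j) else 0).

Lemma slack_term_ge0 al x j : T x = true -> (j < n)%nat -> 0 <= slack_term al x j.
Proof.
  intros Hx Hj. pose proof (inT_lt x Hx) as Hxn. unfold slack_term.
  destruct (P_eq0_or_edge x j Hxn Hj) as [Hp|Hxj]; [rewrite Hp; lra|].
  pose proof (slack_ge0 x j Hx Hxj). pose proof (P_ge0 x j Hxn Hj).
  pose proof (Rpower_gt0 al (slack x j)).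
  apply Rmult_le_pos; [apply Rmult_le_pos|]; lra.
Qed.

Lemma slack_rate_ge0 al : 0 <= slack_rate al.
Proof.
  apply sumR_ge0. intros x _. destruct (T x) eqn:Hx; [|lra].
  apply sumR_ge0. intros j Hj. now apply slack_term_ge0.
Qed.

Lemma excess_source_le al x : 0 < al < 1 -> T x = true ->
  excess_source al x <= slack_rate al * Rpower al (d x).
Proof.
  intros Hal Hx. pose proof (inT_lt x Hx) as Hxn.
  apply Rle_trans with (Rpower al (d x) * sumR n (fun j => slack_term al x j)).
  - rewrite <- sumR_scal. apply sumR_le. intros j Hj.
    destruct (P_eq0_or_edge x j Hxn Hj) as [Hp|Hxj].
    + rewrite Pev_P0 by exact Hp. unfold slack_term. rewrite Hp. lra.
    + assert (Hpow : Rpower al (w x j) * Rpower al (d j) =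
                     Rpower al (d x) * Rpower al (slack x j))
        by (rewrite <- !Rpower_plus; f_equal; unfold slack; ring).
      pose proof (Qabs_le_Rpower al j Hal). pose proof (slack_ge0 x j Hx Hxj).
      pose proof (P_ge0 x j Hxn Hj). pose proof (Rpower_gt0 al (w x j)).
      unfold Pev, slack_term.
      apply Rle_trans with (P x j * slack x j * (Rpower al (w x j) * Rpower al (d j))).
      * replace (P x j * Rpower al (w x j) * slack x j * Q al j)
          with (P x j * slack x j * Rpower al (w x j) * Q al j) by ring.
        rewrite <- Rmult_assoc. apply Rmult_le_compat_l; [|lra].
        apply Rmult_le_pos; [apply Rmult_le_pos|]; lra.
      * rewrite Hpow. lra.
  - rewrite Rmult_comm. apply Rmult_le_compat_r; [left; apply Rpower_gt0|].
    unfold slack_rate.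
    assert (Hterm := sumR_term_le n
      (fun y => if T y then sumR n (fun j => slack_term al y j) else 0) x).
    cbv beta in Hterm. rewrite Hx in Hterm. apply Hterm; [|exact Hxn].
    intros y _. destruct (T y) eqn:Hy; [|lra].
    apply sumR_ge0. intros j Hj. now apply slack_term_ge0.
Qed.

Lemma slack_term_vanishes x j : T x = true -> (j < n)%nat ->
  limit1_in (fun al => slack_term al x j) (fun al => 0 < al < 1) 0 0.
Proof.
  intros Hx Hj. unfold slack_term. destruct (Rlt_dec 0 (slack x j)) as [Hpos|Hnpos].
  - assert (Hlim := limit_mul (fun _ => P x j * slack x j)
      (fun al => Rpower al (slack x j)) (fun al => 0 < al < 1) _ 0 0
      (limit_free (fun _ => P x j * slack x j) _ 0 0) (Rpower_vanishes_at0 _ Hpos)).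
    rewrite Rmult_0_r in Hlim. exact Hlim.
  - assert (Hzero : P x j * slack x j = 0).
    { destruct (P_eq0_or_edge x j (inT_lt x Hx) Hj) as [Hp|Hxj]; [rewrite Hp; ring|].
      pose proof (slack_ge0 x j Hx Hxj). replace (slack x j) with 0 by lra. ring. }
    apply (limit1_ext (fun _ => 0)); [intros al _; rewrite Hzero; ring|].
    exact (limit_free (fun _ => 0) _ 0 0).
Qed.

Lemma slack_rate_vanishes : limit1_in slack_rate (fun al => 0 < al < 1) 0 0.
Proof.
  assert (Hlim := limit1_in_sumR
    (fun x al => if T x then sumR n (fun j => slack_term al x j) else 0)
    (fun _ => 0) (fun al => 0 < al < 1) 0 n).
  rewrite sumR_0 in Hlim. apply Hlim. intros x _.
  destruct (T x) eqn:Hx.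
  - assert (Hrow := limit1_in_sumR (fun j al => slack_term al x j) (fun _ => 0)
      (fun al => 0 < al < 1) 0 n).
    rewrite sumR_0 in Hrow. apply Hrow. intros j Hj. now apply slack_term_vanishes.
  - exact (limit_free (fun _ => 0) _ 0 0).
Qed.

Definition absorption_time := Fapply (1/2) (fun _ => 1).

Lemma absorption_time_eq x : T x = true ->
  absorption_time x = sumR n (fun j => A (1/2) x j * absorption_time j) + 1.
Proof. intros Hx. apply Fapply_eq; [lra|exact Hx]. Qed.

Lemma absorption_time_out j : T j = false -> absorption_time j = 0.
Proof. intros HTj. unfold absorption_time, Fapply. now rewrite HTj. Qed.

Lemma absorption_time_ge0 j : 0 <= absorption_time j.
Proof.
  destruct (T j) eqn:HTj; [|rewrite absorption_time_out by exact HTj; lra].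
  apply (minimum_principle (1/2) absorption_time); [lra| |now intros k _ HTk;
    rewrite absorption_time_out by exact HTk; lra|exact HTj].
  intros x Hx. rewrite (absorption_time_eq x Hx). lra.
Qed.

(* The right-hand side is a supersolution of the system excess_eq, since
   excess_source <= slack_rate al^d <= slack_rate (2 al)^d and, by the triangle
   inequality, A al x j (2 al)^(d j) <= A (1/2) x j (2 al)^(d x). *)
Lemma excess_le al x : 0 < al < 1/2 -> T x = true ->
  excess al x <= slack_rate al * Rpower (2 * al) (d x) * absorption_time x.
Proof.
  intros Hal Hx. assert (Hal1 : 0 < al < 1) by lra.
  set (h := absorption_time).
  enough (0 <= slack_rate al * Rpower (2 * al) (d x) * h x - excess al x) by lra.
  apply (minimum_principle al
           (fun j => slack_rate al * Rpower (2 * al) (d j) * h j - excess al j));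
    [exact Hal1| | |exact Hx].
  - intros y Hy. pose proof (inT_lt y Hy) as Hyn.
    rewrite (sumR_ext _ _ (fun j =>
               slack_rate al * (A al y j * Rpower (2 * al) (d j) * h j) -
               A al y j * excess al j))
      by (intros; ring).
    rewrite sumR_sub, sumR_scal.
    assert (Hshift : sumR n (fun j => A al y j * Rpower (2 * al) (d j) * h j) <=
                     Rpower (2 * al) (d y) * sumR n (fun j => A (1/2) y j * h j)).
    { rewrite <- sumR_scal. apply sumR_le. intros j Hj.
      pose proof (absorption_time_ge0 j).
      destruct (P_eq0_or_edge y j Hyn Hj) as [Hp|Hyj].
      - rewrite !Pev_P0 by exact Hp. lra.
      - unfold Pev. pose proof (P_ge0 y j Hyn Hj).
        pose proof (Rpower_shift al (w y j) (d y) (d j) Hal (d_triangle y j Hy Hyj)).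
        assert (0 <= P y j * h j) by (apply Rmult_le_pos; auto). nra. }
    assert (Hpow : Rpower al (d y) <= Rpower (2 * al) (d y))
      by (apply Rle_Rpower_l; [apply d_ge0|lra]).
    pose proof (slack_rate_ge0 al).
    assert (slack_rate al * sumR n (fun j => A al y j * Rpower (2 * al) (d j) * h j) <=
            slack_rate al *
              (Rpower (2 * al) (d y) * sumR n (fun j => A (1/2) y j * h j)))
      by (apply Rmult_le_compat_l; assumption).
    assert (slack_rate al * Rpower al (d y) <= slack_rate al * Rpower (2 * al) (d y))
      by (apply Rmult_le_compat_l; assumption).
    pose proof (excess_eq al y Hal1 Hy). pose proof (excess_source_le al y Hal1 Hy).
    unfold h. rewrite (absorption_time_eq y Hy). fold h. lra.
  - intros j _ HTj. rewrite excess_out, absorption_time_out by exact HTj. lra.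
Qed.

Lemma Uavoid_tends_to_potential s : T s = true ->
  (exists c, 0 < c /\ forall al, 0 < al < 1 -> c * Rpower al (d s) <= Q al s) ->
  limit1_in (fun al => Uavoid n t B P w al s) (fun al => 0 < al < 1) (d s) 0.
Proof.
  intros Hs [c [Hc HQ]].
  set (K := Rpower 2 (d s) * absorption_time s / c).
  assert (HK : 0 <= K).
  { pose proof (Rpower_gt0 2 (d s)). pose proof (absorption_time_ge0 s).
    unfold K. apply Rmult_le_pos; [apply Rmult_le_pos|left; apply Rinv_0_lt_compat];
      lra. }
  apply limit1_in_squeeze with (fun al => slack_rate al * K).
  - exists (1/2). split; [lra|]. intros al Hal Hdist.
    rewrite Rminus_0_r, Rabs_right in Hdist by lra.
    pose proof (HQ al Hal) as HQal. pose proof (Rpower_gt0 al (d s)).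
    assert (HQs : 0 < Q al s) by nra.
    rewrite Uavoid_eq by (lra || assumption).
    replace (Ncost al s / Q al s - d s) with (excess al s / Q al s)
      by (unfold excess; field; lra).
    pose proof (excess_ge0 al s Hal Hs).
    rewrite Rabs_right
      by (apply Rle_ge, Rmult_le_pos; [|left; apply Rinv_0_lt_compat]; lra).
    apply Rmult_le_reg_r with (Q al s); [exact HQs|].
    unfold Rdiv. rewrite Rmult_assoc, Rinv_l, Rmult_1_r by lra.
    apply Rle_trans with (slack_rate al * K * (c * Rpower al (d s))).
    + replace (slack_rate al * K * (c * Rpower al (d s)))
        with (slack_rate al * Rpower (2 * al) (d s) * absorption_time s)
        by (unfold K; rewrite <- Rpower_mult_distr by lra; field; lra).
      apply excess_le; [lra|exact Hs].
    + apply Rmult_le_compat_l; [apply Rmult_le_pos; [apply slack_rate_ge0|]|]; assumption.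
  - assert (Hlim := limit_mul slack_rate (fun _ => K) (fun al => 0 < al < 1) 0 K 0
      slack_rate_vanishes (limit_free (fun _ => K) _ 0 0)).
    rewrite Rmult_0_l in Hlim. exact Hlim.
Qed.

End Potential.

(** * Shortest paths *)

Hypothesis edge_lt : forall i j, E i j -> (i < n)%nat /\ (j < n)%nat.
Hypothesis B_t : B t = false.

Lemma walk_to_lt x p : walk_to E n B x p t -> forall y, In y p -> (y < n)%nat.
Proof.
  revert x. induction p as [|z q IH]; simpl; intros x Hwalk y Hy; [tauto|].
  destruct Hwalk as [_ [Hz [_ Hwalk]]]. destruct Hy as [<-|Hy]; [exact Hz|].
  exact (IH z Hwalk y Hy).
Qed.

Lemma path_cost_ge0 x p : walk_to E n B x p t -> 0 <= path_cost w x p.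
Proof.
  revert x. induction p as [|z q IH]; simpl; intros x Hwalk; [lra|].
  destruct Hwalk as [Hxz [_ [_ Hwalk]]].
  pose proof (w_pos x z Hxz). pose proof (IH z Hwalk). lra.
Qed.

Lemma walk_to_In_t x p : walk_to E n B x p t -> In t (x :: p).
Proof.
  revert x. induction p as [|z q IH]; simpl; intros x Hwalk; [now left|].
  right. exact (IH z (proj2 (proj2 (proj2 Hwalk)))).
Qed.

Lemma walk_to_suffix a q1 x q2 : walk_to E n B a (q1 ++ x :: q2) t ->
  walk_to E n B x q2 t /\ path_cost w x q2 <= path_cost w a (q1 ++ x :: q2).
Proof.
  revert a. induction q1 as [|z q IH]; simpl; intros a [Haz [_ [_ Hwalk]]].
  - pose proof (w_pos a x Haz). split; [exact Hwalk|lra].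
  - destruct (IH z Hwalk) as [Hsuffix Hcost]. pose proof (w_pos a z Haz).
    split; [exact Hsuffix|lra].
Qed.

Fixpoint lists_upto (k : nat) : list (list nat) :=
  match k with
  | O => [[]]
  | S k => [] :: flat_map (fun x => map (cons x) (lists_upto k)) (seq 0 n)
  end.

Lemma In_lists_upto k l : (length l <= k)%nat -> (forall y, In y l -> (y < n)%nat) ->
  In l (lists_upto k).
Proof.
  revert l. induction k as [|k IH]; intros l Hl Hy.
  - destruct l; simpl in *; [now left|lia].
  - destruct l as [|y l]; simpl; [now left|]. right. apply in_flat_map.
    exists y. split.
    + apply in_seq. assert (y < n)%nat by (apply Hy; now left). lia.
    + apply in_map, IH; [simpl in Hl; lia|]. intros z Hz. apply Hy. now right.
Qed.

(* Simple paths are among the finitely many lists of length <= n over V. *)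
Lemma exists_min_path_cost x : (exists p, avoid_path E n B x p t) ->
  exists L, is_min_path_cost E n B w x t L.
Proof.
  intros Hex.
  assert (Hfin : forall p, avoid_path E n B x p t -> In p (lists_upto n)).
  { intros p [Hnodup Hwalk]. apply In_lists_upto; [|exact (walk_to_lt x p Hwalk)].
    rewrite <- (length_seq n 0). apply NoDup_incl_length; [now inversion Hnodup|].
    intros y Hy. apply in_seq. pose proof (walk_to_lt x p Hwalk y Hy). lia. }
  destruct (exists_min_In (lists_upto n) (fun p => avoid_path E n B x p t)
              (path_cost w x)) as [p [_ [Hp Hmin]]].
  { destruct Hex as [p Hp]. exists p. auto. }
  exists (path_cost w x p). split; [now exists p|].
  intros q Hq. apply Hmin; auto.
Qed.

Definition shortest x := epsilon (inhabits 0) (is_min_path_cost E n B w x t).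

Definition reachable x := B x = false /\ exists p, avoid_path E n B x p t.

Lemma shortest_spec x : (exists p, avoid_path E n B x p t) ->
  is_min_path_cost E n B w x t (shortest x).
Proof. intros Hex. unfold shortest. apply epsilon_spec, exists_min_path_cost, Hex. Qed.

Lemma shortest_ge0 x : reachable x -> 0 <= shortest x.
Proof.
  intros [_ Hex]. destruct (shortest_spec x Hex) as [[p [[_ Hwalk] <-]] _].
  exact (path_cost_ge0 x p Hwalk).
Qed.

(* Unreachable nodes get a distance exceeding every finite shortest-path cost,
   which keeps the triangle inequality along edges into them. *)
Definition far :=
  1 + sumR n (fun x =>
        if excluded_middle_informative (reachable x) then shortest x else 0).

Definition dist x :=
  if excluded_middle_informative (reachable x) then shortest x else far.

Lemma far_ge1 : 1 <= far.
Proof.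
  unfold far. enough (0 <= sumR n (fun x =>
    if excluded_middle_informative (reachable x) then shortest x else 0)) by lra.
  apply sumR_ge0. intros x _.
  destruct (excluded_middle_informative (reachable x)); [now apply shortest_ge0|lra].
Qed.

Lemma dist_ge0 x : 0 <= dist x.
Proof.
  unfold dist. destruct (excluded_middle_informative (reachable x)).
  - now apply shortest_ge0.
  - pose proof far_ge1. lra.
Qed.

Lemma dist_le_far x : (x < n)%nat -> dist x <= far.
Proof.
  intros Hx. unfold dist, far.
  destruct (excluded_middle_informative (reachable x)) as [Hr|]; [|lra].
  assert (Hterm := sumR_term_le n (fun y =>
    if excluded_middle_informative (reachable y) then shortest y else 0) x).
  cbv beta in Hterm. destruct (excluded_middle_informative (reachable x)); [|tauto].
  enough (shortest x <= sumR n (fun y =>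
    if excluded_middle_informative (reachable y) then shortest y else 0)) by lra.
  apply Hterm; [|exact Hx]. intros y _.
  destruct (excluded_middle_informative (reachable y)); [now apply shortest_ge0|lra].
Qed.

Lemma avoid_path_nil : avoid_path E n B t [] t.
Proof. split; [constructor; [intros []|constructor]|reflexivity]. Qed.

Lemma dist_t : dist t = 0.
Proof.
  assert (Hr : reachable t) by (split; [exact B_t|exists []; exact avoid_path_nil]).
  unfold dist. destruct (excluded_middle_informative (reachable t)); [|tauto].
  pose proof (shortest_ge0 t Hr).
  destruct (shortest_spec t (proj2 Hr)) as [_ Hmin].
  pose proof (Hmin [] avoid_path_nil). simpl in *. lra.
Qed.

(* Prepend the edge, cutting out the loop if x already lies on q. *)
Lemma avoid_path_cons x j q : E x j -> B j = false -> avoid_path E n B j q t ->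
  exists p, avoid_path E n B x p t /\ path_cost w x p <= w x j + path_cost w j q.
Proof.
  intros Hxj Hj [Hnodup Hwalk]. pose proof (w_pos x j Hxj).
  destruct (classic (In x (j :: q))) as [[<-|Hin]|Hnin].
  - exists q. split; [split; assumption|lra].
  - destruct (in_split _ _ Hin) as [q1 [q2 ->]].
    destruct (walk_to_suffix j q1 x q2 Hwalk) as [Hsuffix Hcost].
    exists q2. split; [split; [|exact Hsuffix]|lra].
    inversion Hnodup as [|? ? _ Hnodup']. now apply NoDup_app_remove_l in Hnodup'.
  - exists (j :: q). split; [split|simpl; lra].
    + now constructor.
    + simpl. repeat split;
        [exact Hxj|exact (proj2 (edge_lt x j Hxj))|exact Hj|exact Hwalk].
Qed.

Lemma dist_triangle x j : T x = true -> E x j -> dist x <= w x j + dist j.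
Proof.
  intros Hx Hxj. pose proof (w_pos x j Hxj). apply inT_spec in Hx as [Hxn [_ HBx]].
  unfold dist at 2. destruct (excluded_middle_informative (reachable j)) as [[HBj Hj]|].
  - destruct (shortest_spec j Hj) as [[q [Hq Hcost]] _].
    destruct (avoid_path_cons x j q Hxj HBj Hq) as [p [Hp Hpcost]].
    assert (Hrx : reachable x) by (split; [exact HBx|now exists p]).
    unfold dist. destruct (excluded_middle_informative (reachable x)); [|tauto].
    destruct (shortest_spec x (proj2 Hrx)) as [_ Hmin].
    pose proof (Hmin p Hp). lra.
  - pose proof (dist_le_far x Hxn). lra.
Qed.

Fixpoint path_prob (x : nat) (p : list nat) : R :=
  match p with
  | [] => 1
  | y :: q => P x y * path_prob y q
  end.

Lemma path_prob_pos x p : walk_to E n B x p t -> 0 < path_prob x p.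
Proof.
  revert x. induction p as [|z q IH]; simpl; intros x Hwalk; [lra|].
  destruct Hwalk as [Hxz [_ [_ Hwalk]]]. destruct (edge_lt x z Hxz).
  apply Rmult_lt_0_compat; [now apply P_pos_iff_edge|exact (IH z Hwalk)].
Qed.

Lemma Qabs_ge_path al x p : 0 < al < 1 -> (x < n)%nat -> B x = false ->
  avoid_path E n B x p t -> path_prob x p * Rpower al (path_cost w x p) <= Q al x.
Proof.
  intros Hal. revert x. induction p as [|y q IH]; simpl; intros x Hxn HBx [Hnodup Hwalk].
  - simpl in Hwalk. subst x. rewrite Qabs_t, Rpower_O; lra.
  - destruct Hwalk as [Hxy [Hyn [HBy Hwalk]]].
    inversion Hnodup as [|? ? Hxq Hnodup'].
    assert (Hx : T x = true).
    { apply inT_spec. repeat split; [exact Hxn| |exact HBx].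
      intros ->. apply Hxq, (walk_to_In_t y q Hwalk). }
    pose proof (IH y Hyn HBy (conj Hnodup' Hwalk)) as IHy.
    rewrite (Qabs_harmonic al x Hal Hx).
    assert (Hterm : A al x y * Q al y <= sumR n (fun j => A al x j * Q al j)).
    { apply (sumR_term_le n (fun j => A al x j * Q al j)); [|exact Hyn].
      intros k Hk. apply Rmult_le_pos; [now apply Pev_ge0|now apply Qabs_ge0]. }
    assert (A al x y * (path_prob y q * Rpower al (path_cost w y q)) <= A al x y * Q al y)
      by (apply Rmult_le_compat_l; [now apply Pev_ge0|exact IHy]).
    unfold Pev in *. rewrite Rpower_plus.
    replace (P x y * path_prob y q * (Rpower al (w x y) * Rpower al (path_cost w y q)))
      with (P x y * Rpower al (w x y) * (path_prob y q * Rpower al (path_cost w y q)))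
      by ring.
    lra.
Qed.

Lemma Uavoid_tends_to_shortest s : (s < n)%nat -> B s = false -> s <> t ->
  (exists p, avoid_path E n B s p t) ->
  limit1_in (fun al => Uavoid n t B P w al s) (fun al => 0 < al < 1) (shortest s) 0.
Proof.
  intros Hsn HBs Hst Hex.
  assert (Hs : T s = true) by (apply inT_spec; auto).
  assert (Hdist : dist s = shortest s).
  { unfold dist. destruct (excluded_middle_informative (reachable s)) as [|Hnr];
      [reflexivity|exfalso; now apply Hnr]. }
  rewrite <- Hdist.
  apply (Uavoid_tends_to_potential dist dist_t dist_ge0 dist_triangle s Hs).
  destruct (shortest_spec s Hex) as [[p [Hp Hcost]] _].
  exists (path_prob s p). split; [exact (path_prob_pos s p (proj2 Hp))|].
  intros al Hal. rewrite Hdist, <- Hcost. now apply Qabs_ge_path.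
Qed.

End EvaporatingNetwork.

Theorem mainTheorem9
  (n : nat) (E : nat -> nat -> Prop) (P w : nat -> nat -> R)
  (HPnn : forall i j, (i < n)%nat -> (j < n)%nat -> 0 <= P i j)
  (HProw : forall i, (i < n)%nat -> sumR n (fun j => P i j) = 1)
  (HPE : forall i j, (i < n)%nat -> (j < n)%nat -> (0 < P i j <-> E i j))
  (HEV : forall i j, E i j -> (i < n)%nat /\ (j < n)%nat)
  (Hw : forall i j, E i j -> 0 < w i j)
  (t : nat) (Ht : (t < n)%nat)
  (Fl : nat -> bool) (HFt : Fl t = false)
  (s : nat) (Hs : (s < n)%nat) (HsF : Fl s = false) (Hst : s <> t)
  (Hreach : exists p, avoid_path E n Fl s p t) :
  exists L, is_min_path_cost E n Fl w s t L /\
    limit1_in (fun alpha => Uavoid n t Fl P w alpha s)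
              (fun alpha => 0 < alpha < 1) L 0.
Proof.
  exists (shortest n E w t Fl s). split.
  - now apply shortest_spec.
  - exact (Uavoid_tends_to_shortest n E P w HPnn HProw HPE Hw t Ht Fl HEV HFt
             s Hs HsF Hst Hreach).
Qed.
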